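(* Let $p\in\mathcal P$ and assume that both $\Gamma_{\mu(p)}(p)$ and $\Gamma_{\mu(p^r)}(p^r)$ admit an acyclic connected component. Then: (i) $\mu(p)=\mu(p^r)$; (ii) if $\Gamma_{\mu(p)}(p)$ is connected, then $D_{\mu(p)}(p)\cap D_{\mu(p^r)}(p^r)=\varnothing$; (iii) if $\Gamma_{\mu(p)}(p)$ is acyclic, then there is no $x\in N$ with $D_{\mu(p)}(p)=D_{\mu(p^r)}(p^r)=\{x\}$.
   Context: Let $n,h\ge2$, $N=\{1,\dots,n\}$, $H=\{1,\dots,h\}$, $\mathcal P$ the set of $h$-tuples of linear orders on $N$, $p^r$ the profile obtained by reversing each order; $x>_{p_i}y$ means $x\neq y$ and $p_i$ ranks $x$ above $y$; for an integer $\mu\in(h/2,h]$, $x>^p_\mu y$ means $|\{i: x>_{p_i}y\}|\ge\mu$; $D_\mu(p)=\{x\in N: \forall y,\ |\{i: y>_{p_i}x\}|<\mu\}$; $\mu(p)=\min\{\mu\in\mathbb N\cap(h/2,h]: D_\mu(p)\ne\varnothing\}$. $\Gamma_\mu(p)$ is the directed graph $(N,\{(x,y): x>^p_\mu y\})$. Connected components are those of the underlying undirected graph; a directed graph is acyclic if it contains no directed cycle (on $l\ge2$ distinct vertices) as a subgraph. *)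

From mathcomp Require Import all_boot.
Set Implicit Arguments. Unset Strict Implicit. Unset Printing Implicit Defensive.

(* Voters H = 'I_h, alternatives N = 'I_n.  A profile assigns to each voter i
   a relation [p i], where [p i x y] means "p_i ranks x above y". *)
Definition strict_linear_order (T : finType) (r : rel T) : Prop :=
  [/\ irreflexive r, transitive r & forall x y, x != y -> r x y || r y x].

Definition profile {n h : nat} (p : 'I_h -> rel 'I_n) : Prop :=
  forall i, strict_linear_order (p i).

Definition rev_profile {n h : nat} (p : 'I_h -> rel 'I_n) : 'I_h -> rel 'I_n :=
  fun i x y => p i y x.

Definition gtp {n h : nat} (p : 'I_h -> rel 'I_n) (i : 'I_h) (x y : 'I_n) : bool :=
  (x != y) && p i x y.

Definition nsupp {n h : nat} (p : 'I_h -> rel 'I_n) (x y : 'I_n) : nat :=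
  #|[set i | gtp p i x y]|.

Definition beats {n h : nat} (p : 'I_h -> rel 'I_n) (mu : nat) : rel 'I_n :=
  fun x y => mu <= nsupp p x y.

Definition Dmu {n h : nat} (p : 'I_h -> rel 'I_n) (mu : nat) : {set 'I_n} :=
  [set x | [forall y, nsupp p y x < mu]].

(* mu(p) = min { mu in N cap (h/2, h] : D_mu(p) <> empty }.
   The integers in (h/2, h] are exactly h./2.+1, ..., h (in increasing order);
   the head of the filtered list is the minimum.  The default h is never used
   for genuine profiles (D_h(p) contains the top alternative of p_1). *)
Definition mu_of {n h : nat} (p : 'I_h -> rel 'I_n) : nat :=
  head h [seq m <- iota h./2.+1 (h - h./2) | Dmu p m != set0].

Definition Gamma {n h : nat} (p : 'I_h -> rel 'I_n) (mu : nat) : rel 'I_n :=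
  beats p mu.

Definition undirected (T : finType) (e : rel T) : rel T :=
  fun x y => e x y || e y x.

Definition component (T : finType) (e : rel T) (x : T) : {set T} :=
  [set y | connect (undirected e) x y].

Definition graph_connected (T : finType) (e : rel T) : Prop :=
  forall x y : T, connect (undirected e) x y.

Definition has_dicycle_in (T : finType) (e : rel T) (A : {set T}) : Prop :=
  exists s : seq T, [/\ 2 <= size s, uniq s, {subset s <= A} & cycle e s].

Definition graph_acyclic (T : finType) (e : rel T) : Prop :=
  ~ has_dicycle_in e [set: T].

Definition has_acyclic_component (T : finType) (e : rel T) : Prop :=
  exists x : T, ~ has_dicycle_in e (component e x).

From mathcomp Require Import all_boot zify.

Set Implicit Arguments.
Unset Strict Implicit.
Unset Printing Implicit Defensive.

(* A sink y of Gamma_mu(p) (a vertex with no outgoing edge) is exactly an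
   alternative beaten by fewer than mu voters of p^r, i.e. y lies in
   D_mu(p^r); and every acyclic component of an irreflexive digraph contains a
   sink.  Hence D_{mu(p)}(p^r) and D_{mu(p^r)}(p) are nonempty, and minimality of
   mu gives mu(p) = mu(p^r).  An alternative in D_mu(p) and in D_mu(p^r) has
   no edge at all in Gamma_mu(p); this is impossible in a connected graph on
   n >= 2 vertices, and in an acyclic graph the component of any other
   vertex has a sink, which lies in D_mu(p^r) yet differs from the isolated
   alternative. *)

Section Sinks.
Variables (T : finType) (e : rel T).

Lemma connect_forward_closed (C : {set T}) x y :
  (forall w z, w \in C -> e w z -> z \in C) ->
  x \in C -> connect e x y -> y \in C.
Proof.
move=> clC + /connectP[s es ->].
elim: s x es => [|a s IH] x //= /andP[exa es] xC.
exact: IH es (clC _ _ xC exa).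
Qed.

Lemma has_dicycle_in_sub (A B : {set T}) :
  A \subset B -> has_dicycle_in e A -> has_dicycle_in e B.
Proof.
move=> /subsetP AB [s [s_ge2 s_uniq sA s_cycle]].
by exists s; split=> // w /sA /AB.
Qed.

(* A vertex of C reaching the fewest vertices is a sink: an edge y -> z would
   either close a cycle through y or let z reach strictly fewer vertices. *)
Lemma closed_acyclic_sink (C : {set T}) x :
  irreflexive e -> (forall w z, w \in C -> e w z -> z \in C) ->
  ~ has_dicycle_in e C -> x \in C -> exists2 y, y \in C & forall z, ~~ e y z.
Proof.
move=> irr clC acyc xC.
have [y yC ymin] := arg_minnP (fun y => #|[set z | connect e y z]|) xC.
exists y => // z; apply/negP => eyz.
have zC := clC _ _ yC eyz.
have [/connectP[s es ys] | nczy] := boolP (connect e z y).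
  apply: acyc; case/shortenP: es ys => s' es' s'_uniq _ ys'.
  exists (z :: s'); split => //.
  - by case: s' ys' {es' s'_uniq} => [/= zy|//]; move: eyz; rewrite -zy irr.
  - by move=> w /(path_connect es'); apply: connect_forward_closed.
  - by rewrite /cycle rcons_path es' -ys' eyz.
have : #|[set w | connect e z w]| < #|[set w | connect e y w]|.
  apply: proper_card; apply/properP; split.
    by apply/subsetP => w; rewrite !inE; apply: connect_trans (connect1 eyz).
  by exists y; rewrite !inE ?connect0.
by rewrite ltnNge ymin.
Qed.

Lemma undirected_connect_sym : connect_sym (undirected e).
Proof. by apply: sym_connect_sym => a b; rewrite /undirected orbC. Qed.

Lemma component_forward_closed x w z :
  w \in component e x -> e w z -> z \in component e x.
Proof.
rewrite !inE => xw ewz.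
by apply: connect_trans xw (connect1 _); rewrite /undirected ewz.
Qed.

Lemma acyclic_component_sink x :
  irreflexive e -> ~ has_dicycle_in e (component e x) ->
  exists2 y, y \in component e x & forall z, ~~ e y z.
Proof.
move=> irr acyc; apply: (closed_acyclic_sink (x := x) irr _ acyc).
  exact: component_forward_closed.
by rewrite inE connect0.
Qed.

Lemma isolated_connect x y :
  (forall z, ~~ undirected e x z) -> connect (undirected e) x y -> y = x.
Proof.
move=> iso /connectP[[|a s] /= ps ->] //.
by case/andP: ps => exa; move: (iso a); rewrite exa.
Qed.

End Sinks.

Lemma exists_neq_ord m (x : 'I_m) : 1 < m -> exists y : 'I_m, y != x.
Proof.
move=> m_gt1; have : 0 < #|[set~ x]| by rewrite cardsC1 card_ord; lia.
by case/card_gt0P => y; rewrite !inE; exists y.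
Qed.

Lemma head_filter_iota_le (P : pred nat) d a k m :
  a <= m < a + k -> P m -> head d (filter P (iota a k)) <= m.
Proof.
elim: k a => [|k IH] a /=; first by lia.
move=> m_in Pm; case: ifP => Pa /=; first by lia.
apply: (IH _ _ Pm); case: (eqVneq a m) => [am|]; last by lia.
by move: Pa; rewrite am Pm.
Qed.

Section Majority.
Variables (n h : nat).
Implicit Types (p : 'I_h -> rel 'I_n) (mu : nat).

Lemma nsupp_rev p x y : nsupp (rev_profile p) x y = nsupp p y x.
Proof.
by apply: eq_card => i; rewrite !inE /gtp /rev_profile eq_sym.
Qed.

Lemma Gamma_irr p mu : 0 < mu -> irreflexive (Gamma p mu).
Proof.
move=> mu_gt0 x; rewrite /Gamma /beats /nsupp.
have -> : [set i | gtp p i x x] = set0.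
  by apply/setP => i; rewrite !inE /gtp eqxx.
by rewrite cards0 leqNgt mu_gt0.
Qed.

Lemma sink_in_Dmu_rev p mu y :
  (forall z, ~~ Gamma p mu y z) -> y \in Dmu (rev_profile p) mu.
Proof.
move=> sink_y; rewrite inE; apply/forallP => z.
by rewrite nsupp_rev ltnNge; apply: sink_y.
Qed.

Lemma Dmu_Dmu_rev_isolated p mu x :
  x \in Dmu p mu -> x \in Dmu (rev_profile p) mu ->
  forall z, ~~ undirected (Gamma p mu) x z.
Proof.
rewrite !inE => /forallP Dx /forallP Drx z.
have := Drx z; rewrite nsupp_rev => zx.
by rewrite /undirected /Gamma /beats negb_or -!ltnNge zx Dx.
Qed.

Hypothesis h_gt0 : 0 < h.

Lemma mu_of_range p : h./2 < mu_of p <= h.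
Proof.
have half_lt : h./2 < h by rewrite ltn_half_double -addnn; lia.
rewrite /mu_of.
case Es: [seq m <- iota h./2.+1 (h - h./2) | Dmu p m != set0] => [|a s] /=.
  by lia.
have : a \in a :: s by rewrite mem_head.
by rewrite -Es mem_filter mem_iota => /andP[_]; lia.
Qed.

Lemma mu_of_min p m : h./2 < m <= h -> Dmu p m != set0 -> mu_of p <= m.
Proof. by move=> m_in; apply: head_filter_iota_le; lia. Qed.

Lemma Gamma_mu_of_irr p : irreflexive (Gamma p (mu_of p)).
Proof. by apply: Gamma_irr; have := mu_of_range p; lia. Qed.

Lemma mu_of_rev_le p :
  has_acyclic_component (Gamma p (mu_of p)) ->
  mu_of (rev_profile p) <= mu_of p.
Proof.
case=> x acyc; have [y _ sink_y] := acyclic_component_sink (Gamma_mu_of_irr p) acyc.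
apply: mu_of_min; first exact: mu_of_range.
by apply/set0Pn; exists y; apply: sink_in_Dmu_rev.
Qed.

End Majority.

Theorem lemma6 (n h : nat) (hn : 2 <= n) (hh : 2 <= h)
    (p : 'I_h -> rel 'I_n) (hp : profile p) :
  has_acyclic_component (Gamma p (mu_of p)) ->
  has_acyclic_component (Gamma (rev_profile p) (mu_of (rev_profile p))) ->
  [/\ mu_of p = mu_of (rev_profile p),
      graph_connected (Gamma p (mu_of p)) ->
        Dmu p (mu_of p) :&: Dmu (rev_profile p) (mu_of (rev_profile p)) = set0
    & graph_acyclic (Gamma p (mu_of p)) ->
        ~ (exists x : 'I_n, Dmu p (mu_of p) = [set x] /\
             Dmu (rev_profile p) (mu_of (rev_profile p)) = [set x])].
Proof.
(* The argument only counts supporters. *)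
have h_gt0 : 0 < h by lia.
move=> acyc_p acyc_rp.
(* [rev_profile (rev_profile p)] is convertible to [p]. *)
have mu_eq : mu_of p = mu_of (rev_profile p).
  by apply/eqP; rewrite eqn_leq !mu_of_rev_le.
rewrite -mu_eq; split=> // [conn | acyc [x [Dx Drx]]].
  apply/setP => x; rewrite in_set0 in_setI; apply/negbTE/negP => /andP[Dx Drx].
  have [y yx] := exists_neq_ord x hn.
  by move: yx; rewrite (isolated_connect (Dmu_Dmu_rev_isolated Dx Drx) (conn x y)) eqxx.
have iso : forall z, ~~ undirected (Gamma p (mu_of p)) x z.
  by apply: Dmu_Dmu_rev_isolated; rewrite ?Dx ?Drx set11.
have [y yx] := exists_neq_ord x hn.
have [z yz sink_z] := acyclic_component_sink (x := y) (Gamma_mu_of_irr h_gt0 p)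
  (fun cyc => acyc (has_dicycle_in_sub (subsetT _) cyc)).
have zx : z = x by apply/set1P; rewrite -Drx; apply: sink_in_Dmu_rev.
move: yz; rewrite inE zx undirected_connect_sym => /(isolated_connect iso) yx'.
by rewrite yx' eqxx in yx.
Qed.
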